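(* Let $G>I$ be a finite group with $Z(G)=I$ and let $\sigma_1,\sigma_2\in G$ with $G=\langle\sigma_1,\sigma_2\rangle$, $\sigma_1\sigma_2\sigma_1=\sigma_2\sigma_1\sigma_2$ and $o(\sigma_1\sigma_2\sigma_1)=2$. Let $C=[\sigma_1]$ and $D=[\sigma_1\sigma_2\sigma_1]$ (conjugacy classes). Put $h_1=[\sigma_1,\sigma_2,\sigma_1,\sigma_1\sigma_2\sigma_1]$, $h_2=[\sigma_2\sigma_1\sigma_2^{-1},\sigma_2,\sigma_1,\sigma_2\sigma_1^2]$, $h_3=[\sigma_2,\sigma_1,\sigma_1,\sigma_2\sigma_1^2]$, $h_4=[\sigma_2,\sigma_2,\sigma_1,\sigma_2^2\sigma_1]$. Then $Z_4=\{h_1\}^{B_4}=\{h_1,h_2,h_3,h_4\}\subseteq\Sigma^i(C,C,C,D)$ is an orbit of length $4$ under $B_4$, with (identifying $h_i$ with $i$) $\rho_4(\beta_{12})=(1,2,3)(4)$, $\rho_4(\beta_{13})=(1,3,4)(2)$, $\rho_4(\beta_{14})=(1,4,2)(3)$, $\rho_4(B_4)\cong A_4$, and genus $g_{Z_4}=0$.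
   Context: $\iota$ is the identity and $I$ the trivial group. $\Sigma^i(C_1,\dots,C_4)$ is the set of $G$-conjugacy classes $[\sigma_1,\dots,\sigma_4]$ (simultaneous conjugation) of tuples with $\sigma_j\in C_j$, $\langle\sigma_1,\dots,\sigma_4\rangle=G$, $\sigma_1\sigma_2\sigma_3\sigma_4=\iota$. Braids act from the right: $[\underline{\sigma}]^{\beta_2}=[\sigma_1\sigma_2\sigma_1^{-1},\sigma_1,\sigma_3,\sigma_4]$, $[\underline{\sigma}]^{\beta_3}=[\sigma_1,\sigma_2\sigma_3\sigma_2^{-1},\sigma_2,\sigma_4]$, $[\underline{\sigma}]^{\beta_4}=[\sigma_1,\sigma_2,\sigma_3\sigma_4\sigma_3^{-1},\sigma_3]$. The pure braid group $B_4$ is generated by $\beta_{12}=\beta_2^2$, $\beta_{13}=\beta_2^{-1}\beta_3^2\beta_2$, $\beta_{14}=\beta_2^{-1}\beta_3^{-1}\beta_4^2\beta_3\beta_2$, $\beta_{23}=\beta_3^2$, $\beta_{24}=\beta_3^{-1}\beta_4^2\beta_3$, $\beta_{34}=\beta_4^2$; $\rho_4$ is the induced permutation representation. For a $B_4$-orbit $Z$, $g_Z=1-|Z|+\frac12(3|Z|-z_{12}-z_{13}-z_{14})$ with $z_{1j}$ the number of cycles (fixed points included) of $\rho_4(\beta_{1j})$ on $Z$. *)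

From HB Require Import structures.
From mathcomp Require Import all_boot all_order all_algebra all_fingroup all_solvable.
Set Implicit Arguments. Unset Strict Implicit. Unset Printing Implicit Defensive.
Import GRing.Theory.

Section Braid.
Variable gT : finGroupType.
Local Open Scope group_scope.

Definition T4 := (gT * gT * gT * gT)%type.

Definition tconj (t : T4) (g : gT) : T4 :=
  let: (a, b, c, d) := t in (a ^ g, b ^ g, c ^ g, d ^ g).

Definition tcls (G : {set gT}) (t : T4) : {set T4} := [set tconj t g | g in G].

Definition inSigma (G C1 C2 C3 C4 : {set gT}) (X : {set T4}) : Prop :=
  exists a b c d : gT,
    [/\ X = tcls G (a, b, c, d),
        [/\ a \in C1, b \in C2, c \in C3 & d \in C4],
        <<[set a; b; c; d]>> = G
      & a * b * c * d = 1].

(* Artin generators beta_2, beta_3, beta_4 (right action) and their inverses.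
   A generator is a pair (k, inv) with k in {0,1,2} standing for beta_{k+2}. *)
Definition beta (k : 'I_3) (inv : bool) (t : T4) : T4 :=
  let: (a, b, c, d) := t in
  match val k, inv with
  | 0, false => (a * b * a^-1, a, c, d)
  | 0, true  => (b, b^-1 * a * b, c, d)
  | 1, false => (a, b * c * b^-1, b, d)
  | 1, true  => (a, c, c^-1 * b * c, d)
  | _, false => (a, b, c * d * c^-1, c)
  | _, true  => (a, b, d, d^-1 * c * d)
  end.

Definition act_word (w : seq ('I_3 * bool)) (t : T4) : T4 :=
  foldl (fun t g => beta g.1 g.2 t) t w.

Definition b2 : 'I_3 := @Ordinal 3 0 isT.
Definition b3 : 'I_3 := @Ordinal 3 1 isT.
Definition b4 : 'I_3 := @Ordinal 3 2 isT.

(* pure braid generators: 0 = beta12, 1 = beta13, 2 = beta14,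
   3 = beta23, 4 = beta24, 5 = beta34 *)
Definition pure_word (j : 'I_6) : seq ('I_3 * bool) :=
  match val j with
  | 0 => [:: (b2, false); (b2, false)]
  | 1 => [:: (b2, true); (b3, false); (b3, false); (b2, false)]
  | 2 => [:: (b2, true); (b3, true); (b4, false); (b4, false); (b3, false); (b2, false)]
  | 3 => [:: (b3, false); (b3, false)]
  | 4 => [:: (b3, true); (b4, false); (b4, false); (b3, false)]
  | _ => [:: (b4, false); (b4, false)]
  end.

Definition inv_word (w : seq ('I_3 * bool)) : seq ('I_3 * bool) :=
  rev [seq (g.1, ~~ g.2) | g <- w].

Definition pure_to_word (w : seq ('I_6 * bool)) : seq ('I_3 * bool) :=
  flatten [seq (if e.2 then inv_word (pure_word e.1) else pure_word e.1) | e <- w].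

Definition act_cls (w : seq ('I_3 * bool)) (X : {set T4}) : {set T4} :=
  [set act_word w t | t in X].

Definition act_pure (w : seq ('I_6 * bool)) (X : {set T4}) : {set T4} :=
  act_cls (pure_to_word w) X.

(* the tuples h_1, ..., h_4 (indexed 0..3) *)
Definition htuple (s1 s2 : gT) (i : 'I_4) : T4 :=
  match val i with
  | 0 => (s1, s2, s1, s1 * s2 * s1)
  | 1 => (s2 * s1 * s2^-1, s2, s1, s2 * s1 ^+ 2)
  | 2 => (s2, s1, s1, s2 * s1 ^+ 2)
  | _ => (s2, s2, s1, s2 ^+ 2 * s1)
  end.

End Braid.

Local Open Scope ring_scope.
Definition genusZ (n z12 z13 z14 : nat) : rat :=
  1 - n%:R + (3 * n%:R - z12%:R - z13%:R - z14%:R) / 2.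

Definition i4 (k : nat) : 'I_4 := inord k.
Definition j6 (k : nat) : 'I_6 := inord k.

From HB Require Import structures.
From mathcomp Require Import all_boot all_order all_algebra all_fingroup all_solvable.
Set Implicit Arguments. Unset Strict Implicit. Unset Printing Implicit Defensive.

Local Open Scope group_scope.

(* Put t := s1 s2 s1 and u := s1 s2.  Then t^2 = 1, u^3 = (s1 s2 s1)(s2 s1 s2) = t^2 = 1,
   s1 = u^-1 t and s2 = t u^2, so every entry of every tuple below is a word in t
   and u, and the Hurwitz action of a pure braid generator can be evaluated in the
   modular group <t | t^2> * <u | u^3>, where words have a computable normal form.
   There each generator sends h_i to a conjugate of h_(rho i) for explicit
   3-cycles rho of {1,..,4}; the conjugators lie in G, so the classes are permuted.
   The four classes are distinct because the pattern of equalities among the first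
   three entries is conjugation invariant and differs for h_1, ..., h_4 as soon as
   s1 s2 <> s2 s1, which holds since G is nontrivial, centerless and generated by
   s1, s2.  The 3-cycles rho(beta_12), rho(beta_13) generate A_4, and each has two
   cycles, so g = 1 - 4 + (12 - 6)/2 = 0. *)

Section BraidActionOnTuples.
Variable gT : finGroupType.
Implicit Types (t : T4 gT) (X : {set T4 gT}) (G : {group gT}).

Lemma tconj1 t : tconj t 1 = t.
Proof. by case: t => [[[a b] c] d]; rewrite /= !conjg1. Qed.

Lemma tconjM t g h : tconj t (g * h) = tconj (tconj t g) h.
Proof. by case: t => [[[a b] c] d]; rewrite /= !conjgM. Qed.

Lemma beta_tconj k b t g : beta k b (tconj t g) = tconj (beta k b t) g.
Proof.
case: t => [[[a c] d] e]; case: k => [[|[|[|k]]] ?]; case: b;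
  by rewrite /= ?conjMg ?conjVg.
Qed.

Lemma act_word_tconj w t g : act_word w (tconj t g) = tconj (act_word w t) g.
Proof. by elim: w t => [|[k b] w IH] t //=; rewrite beta_tconj IH. Qed.

Lemma betaK k b t : beta k (~~ b) (beta k b t) = t.
Proof.
case: t => [[[a c] d] e]; case: k => [[|[|[|k]]] ?]; case: b => /=;
  by rewrite !mulgA ?mulVg ?mulgV ?mul1g ?mulgK ?mulgKV.
Qed.

Lemma act_word_cat w1 w2 t : act_word (w1 ++ w2) t = act_word w2 (act_word w1 t).
Proof. exact: foldl_cat. Qed.

Lemma act_wordK w t : act_word (inv_word w) (act_word w t) = t.
Proof.
elim: w t => [|[k b] w IH] t //=.
by rewrite /inv_word map_cons rev_cons -cats1 act_word_cat IH /= betaK.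
Qed.

Lemma act_cls_cat w1 w2 X : act_cls (w1 ++ w2) X = act_cls w2 (act_cls w1 X).
Proof. by rewrite /act_cls -imset_comp; apply: eq_imset => x; apply: act_word_cat. Qed.

Lemma act_pure_nil X : act_pure [::] X = X.
Proof. exact: imset_id. Qed.

Lemma act_pure_cons e w X : act_pure (e :: w) X = act_pure w (act_pure [:: e] X).
Proof. by rewrite /act_pure /pure_to_word /= cats0 act_cls_cat. Qed.

Lemma act_pure1 j X : act_pure [:: (j, false)] X = act_cls (pure_word j) X.
Proof. by rewrite /act_pure /pure_to_word /= cats0. Qed.

Lemma act_pureK j X : act_pure [:: (j, true)] (act_pure [:: (j, false)] X) = X.
Proof.
rewrite act_pure1 /act_pure /pure_to_word /= cats0 /act_cls -imset_comp.
by rewrite (eq_imset _ (act_wordK (pure_word j))) imset_id.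
Qed.

Lemma tcls_tconj G t g : g \in G -> tcls G (tconj t g) = tcls G t.
Proof.
move=> gG; apply/setP=> x; apply/imsetP/imsetP => [[h hG ->]|[h hG ->]].
  by exists (g * h); rewrite ?groupM // tconjM.
by exists (g^-1 * h); rewrite ?groupM ?groupV // -tconjM mulKVg.
Qed.

Lemma act_cls_tcls G w t : act_cls w (tcls G t) = tcls G (act_word w t).
Proof.
rewrite /act_cls /tcls -imset_comp; apply: eq_imset => g /=.
by rewrite act_word_tconj.
Qed.

Definition coincidences t : bool * bool * bool :=
  let: (a, b, c, _) := t in (a == b, a == c, b == c).

Lemma coincidences_tconj t g : coincidences (tconj t g) = coincidences t.
Proof. by case: t => [[[a b] c] d]; rewrite /= !(inj_eq (@conjg_inj _ g)). Qed.

Lemma coincidences_tcls G t t' :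
  tcls G t = tcls G t' -> coincidences t = coincidences t'.
Proof.
move=> eq_tt'; have /imsetP[g _ ->] : t \in tcls G t'.
  by rewrite -eq_tt'; apply/imsetP; exists 1; rewrite ?tconj1.
exact: coincidences_tconj.
Qed.

Lemma htuple_tcls_inj G x y :
  x * y != y * x -> injective (fun i => tcls G (htuple x y i)).
Proof.
move=> nxy; have nxy' : x != y by apply: contraNneq nxy => ->.
have nyx' : y != x by rewrite eq_sym.
have conj_y : y * x * y^-1 != y.
  apply: contraNneq nxy' => e.
  by rewrite -(inj_eq (mulgI y)) -(inj_eq (mulIg y^-1)) e mulgK.
have conj_x : y * x * y^-1 != x.
  by apply: contraNneq nxy => e; apply/eqP; rewrite -[in LHS]e mulgKV.
move=> i k /coincidences_tcls.
case: i => [[|[|[|[|//]]]] ?]; case: k => [[|[|[|[|//]]]] ?];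
  rewrite /= ?eqxx ?(eq_sym y (y * x * y^-1)) ?(negbTE nxy') ?(negbTE nyx')
    ?(negbTE conj_x) ?(negbTE conj_y) => eq_ik;
  first [discriminate eq_ik | exact: val_inj].
Qed.

End BraidActionOnTuples.

Section TwoGenerated.
Variable gT : finGroupType.
Implicit Types (G H : {group gT}) (x y : gT).

Lemma gen2_centerless_not_commute G x y :
  G :!=: 1 -> 'Z(G) = 1 -> G :=: <<[set x; y]>> -> x * y != y * x.
Proof.
move=> ntG ZG1 defG; apply: contra ntG => /eqP cxy.
have /center_idP <- : abelian G.
  rewrite defG abelian_gen; apply/centsP => a /set2P[] -> b /set2P[] -> //.
by rewrite ZG1.
Qed.

Lemma gen_set4 G x y a b c d :
  G :=: <<[set x; y]>> -> [set a; b; c; d] \subset G ->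
  x \in [set a; b; c; d] -> y \in [set a; b; c; d] -> <<[set a; b; c; d]>> = G.
Proof.
move=> defG sG xS yS; apply/eqP; rewrite eqEsubset gen_subG sG /=.
by rewrite defG genS // subUset !sub1set xS yS.
Qed.

Lemma braid_involution_param H x y :
  x \in H -> y \in H -> x * y * x = y * x * y -> #[x * y * x] = 2 ->
  exists t u, [/\ t * t = 1, u * u * u = 1, t \in H, u \in H
                & x = u^-1 * t /\ y = t * u * u].
Proof.
move=> xH yH braid ord2; exists (x * y * x), (x * y).
have t2 : x * y * x * (x * y * x) = 1.
  by rewrite -[RHS](expg_order (x * y * x)) ord2 expgS expg1.
have u3 : x * y * (x * y) * (x * y) = 1.
  by rewrite -[RHS]t2 {2}braid !mulgA.
split; rewrite ?groupM //; split; first by rewrite invMg !mulgA mulgKV mulVg mul1g.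
have uV : (x * y)^-1 = x * y * (x * y).
  by apply: (mulgI (x * y)); rewrite mulgV mulgA u3.
by rewrite -mulgA -uV braid invMg !mulgA !mulgK.
Qed.

End TwoGenerated.

Section TwoThreeWords.
Variables (gT : finGroupType) (t u : gT).
Hypotheses (t2 : t * t = 1) (u3 : u * u * u = 1).

Lemma invg_t : t^-1 = t.
Proof. by rewrite -[t^-1]mulg1 -t2 mulKg. Qed.

Lemma invg_u : u^-1 = u * u.
Proof. by rewrite -[u^-1]mulg1 -u3 -mulgA mulKg. Qed.

Inductive tu_term := TT | TU | TOne | TMul of tu_term & tu_term.

Fixpoint tu_eval (e : tu_term) : gT :=
  match e with
  | TT => t | TU => u | TOne => 1 | TMul e1 e2 => tu_eval e1 * tu_eval e2
  end.

(* The letter [true] stands for [t], [false] for [u]. *)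
Fixpoint tu_letters (e : tu_term) : seq bool :=
  match e with
  | TT => [:: true] | TU => [:: false] | TOne => [::]
  | TMul e1 e2 => tu_letters e1 ++ tu_letters e2
  end.

Definition eval_letters (s : seq bool) : gT := \prod_(b <- s) (if b then t else u).

(* [reduce_letters] computes the normal form in the free product
   <t | t^2> * <u | u^3>, so [tu_eval_eq] proves every relation of that group. *)
Definition push_letter (b : bool) (r : seq bool) : seq bool :=
  match b, r with
  | true, true :: r' => r'
  | false, false :: false :: r' => r'
  | _, _ => b :: r
  end.

Definition reduce_letters (s : seq bool) : seq bool := foldr push_letter [::] s.

Lemma eval_push_letter b r : eval_letters (push_letter b r) = eval_letters (b :: r).
Proof.
rewrite /eval_letters; case: b; case: r => [|[] r] //=; rewrite !big_cons.
  by rewrite mulgA t2 mul1g.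
by case: r => [|[] r]; rewrite !big_cons // !mulgA u3 mul1g.
Qed.

Lemma eval_reduce_letters s : eval_letters (reduce_letters s) = eval_letters s.
Proof.
elim: s => [|b s IH] //=.
by rewrite eval_push_letter /eval_letters !big_cons; congr (_ * _).
Qed.

Lemma tu_eval_letters e : tu_eval e = eval_letters (tu_letters e).
Proof.
elim: e => [| | |e1 IH1 e2 IH2] /=; rewrite /eval_letters ?big_seq1 ?big_nil //.
by rewrite big_cat IH1 IH2.
Qed.

Lemma tu_eval_eq e1 e2 :
  reduce_letters (tu_letters e1) = reduce_letters (tu_letters e2) ->
  tu_eval e1 = tu_eval e2.
Proof.
by move=> eq12; rewrite !tu_eval_letters -eval_reduce_letters eq12 eval_reduce_letters.
Qed.

End TwoThreeWords.

Ltac reify_tu t u e :=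
  lazymatch e with
  | @mulg _ ?a ?b =>
      let ra := reify_tu t u a in let rb := reify_tu t u b in constr:(TMul ra rb)
  | @oneg _ => constr:(TOne)
  | t => constr:(TT)
  | u => constr:(TU)
  end.

Ltac tu_group_eq t u t2 u3 :=
  rewrite ?expgS ?expg0 ?conjgE ?invMg ?invgK ?invg1 ?(invg_t t2) ?(invg_u u3);
  lazymatch goal with |- ?a = ?b =>
    let ra := reify_tu t u a in let rb := reify_tu t u b in
    apply: (@tu_eval_eq _ t u t2 u3 ra rb); vm_compute; reflexivity
  end.

Definition rho_val (j i : nat) : nat :=
  match j, i with
  | 0, 0 => 1 | 0, 1 => 2 | 0, 2 => 0 | 0, _ => 3
  | 1, 0 => 2 | 1, 1 => 1 | 1, 2 => 3 | 1, _ => 0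
  | 2, 0 => 3 | 2, 1 => 0 | 2, 2 => 2 | 2, _ => 1
  | 3, 0 => 3 | 3, 1 => 0 | 3, 2 => 2 | 3, _ => 1
  | 4, 0 => 0 | 4, 1 => 3 | 4, 2 => 1 | 4, _ => 2
  | _, 0 => 1 | _, 1 => 2 | _, 2 => 0 | _, _ => 3
  end.

Lemma rho_val_lt j i : rho_val j i < 4.
Proof. by case: j => [|[|[|[|[|j]]]]]; case: i => [|[|[|i]]]. Qed.

Definition rho_fun (j : 'I_6) (i : 'I_4) : 'I_4 := Ordinal (rho_val_lt j i).

Lemma rho_fun_inj j : injective (rho_fun j).
Proof.
move=> i k /(congr1 val) /=.
case: j => [[|[|[|[|[|[|//]]]]]] ?]; case: i => [[|[|[|[|//]]]] ?];
  by case: k => [[|[|[|[|//]]]] ?] //= _; apply: val_inj.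
Qed.

Definition rho (j : 'I_6) : {perm 'I_4} := perm (@rho_fun_inj j).

Lemma rhoE j i : rho j i = rho_fun j i.
Proof. exact: permE. Qed.

Lemma rho_inord j i : j < 6 -> i < 4 -> rho (inord j) (inord i) = inord (rho_val j i).
Proof. by move=> lt_j lt_i; apply: val_inj; rewrite rhoE /= !inordK ?rho_val_lt. Qed.

Lemma card_porbits_fixpoint_orbit (T : finType) (p : {perm T}) f a :
  p f = f -> a != f -> (forall x, [|| x == f, x == a, x == p a | x == p (p a)]) ->
  #|porbits p| = 2.
Proof.
move=> pf naf coverT.
have -> : porbits p = [set porbit p a; porbit p f].
  apply/setP => X; apply/imsetP/set2P => [[x _ ->]|[] ->]; last 2 first.
  - by exists a.
  - by exists f.
  case/or4P: (coverT x) => /eqP ->; [by right | by left | left | left].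
  - by have := porbit_perm p 1 a; rewrite expg1.
  - by have := porbit_perm p 2 a; rewrite expgS expg1 permM.
have fix_f i : (p ^+ i) f = f.
  by elim: i => [|i IH]; rewrite ?expg0 ?perm1 // expgSr permM IH pf.
rewrite cards2 eq_porbit_mem; case: porbitP => // -[i]; rewrite fix_f => eq_af.
by rewrite eq_af eqxx in naf.
Qed.

Local Notation o4 k := (@Ordinal 4 k isT).

Lemma card_porbits_rho j : #|porbits (rho j)| = 2.
Proof.
case: j => [[|[|[|[|[|[|//]]]]]] ?];
  [ apply: (@card_porbits_fixpoint_orbit _ _ (o4 3) (o4 0))
  | apply: (@card_porbits_fixpoint_orbit _ _ (o4 1) (o4 0))
  | apply: (@card_porbits_fixpoint_orbit _ _ (o4 2) (o4 0))
  | apply: (@card_porbits_fixpoint_orbit _ _ (o4 2) (o4 0))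
  | apply: (@card_porbits_fixpoint_orbit _ _ (o4 0) (o4 1))
  | apply: (@card_porbits_fixpoint_orbit _ _ (o4 3) (o4 0)) ];
  by [ apply: val_inj; rewrite rhoE /= | rewrite /=
     | case=> [[|[|[|[|//]]]] ?]; rewrite !rhoE /= ].
Qed.

Lemma rho_even j : rho j \in 'Alt_('I_4).
Proof. by rewrite Alt_even /odd_perm card_ord card_porbits_rho. Qed.

Lemma card_Alt4 : #|'Alt_('I_4)| = 12.
Proof.
by apply/eqP; rewrite -(eqn_pmul2l (isT : 0 < 2)) card_Alt card_ord.
Qed.

Lemma gen_rho_Alt : <<[set rho j | j : 'I_6]>> = 'Alt_('I_4).
Proof.
set S := [set rho j | j : 'I_6].
pose a := rho (@Ordinal 6 0 isT); pose b := rho (@Ordinal 6 1 isT).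
have aS : a \in <<S>> by apply/mem_gen/imsetP; exists (@Ordinal 6 0 isT).
have bS : b \in <<S>> by apply/mem_gen/imsetP; exists (@Ordinal 6 1 isT).
pose L := [:: 1; a; b; a * a; a * b; b * a; b * b; a * a * b; a * b * a; a * b * b;
             a * a * b * a; a * a * b * b].
have uniqL : uniq L.
  apply: (@map_uniq _ _ (fun p : {perm 'I_4} => (val (p (o4 0)), val (p (o4 1))))).
  by rewrite /= /a /b !permM !perm1 !rhoE.
apply/eqP; rewrite eqEcard gen_subG; apply/andP; split.
  by apply/subsetP => _ /imsetP[j _ ->]; apply: rho_even.
rewrite card_Alt4 cardE (uniq_leq_size (s1 := L)) //; apply/allP.
by rewrite /= !mem_enum; repeat (apply/andP; split);
  repeat first [exact: aS | exact: bS | exact: group1 | apply: groupM].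
Qed.

Section PureBraidOrbit.
Variables (gT : finGroupType) (t u : gT).
Hypotheses (t2 : t * t = 1) (u3 : u * u * u = 1).

Local Notation s1 := (u^-1 * t).
Local Notation s2 := (t * u * u).

Local Ltac tu_eq := tu_group_eq t u t2 u3.

(* Found by computing the action in <t | t^2> * <u | u^3>: the j-th pure
   generator maps h_i to h_(rho j i) conjugated by [braid_conjugator j i]. *)
Definition braid_conjugator (j i : nat) : gT :=
  match j, i with
  | 0, 0 => t*u         | 0, 1 => 1       | 0, 2 => u*u*t         | 0, _ => 1
  | 1, 0 => t*u*t       | 1, 1 => 1       | 1, 2 => t*u*u*t*u*u*t | 1, _ => u*t
  | 2, 0 => 1           | 2, 1 => 1       | 2, 2 => u*u*t*u*u*t   | 2, _ => 1
  | 3, 0 => t*u*u*t     | 3, 1 => t*u*u*t | 3, 2 => 1             | 3, _ => t*u*u*t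
  | 4, 0 => u*u*t*u*u*t | 4, 1 => u*u*t   | 4, 2 => t*u           | 4, _ => 1
  | _, 0 => t*u*u       | _, 1 => t*u*t   | _, 2 => t             | _, _ => t*u*u*t*u*u
  end.

Lemma act_pure_word_htuple (j : 'I_6) (i : 'I_4) :
  act_word (pure_word j) (htuple s1 s2 i) =
  tconj (htuple s1 s2 (rho j i)) (braid_conjugator j i).
Proof.
rewrite rhoE; case: j => [[|[|[|[|[|[|//]]]]]] ?]; case: i => [[|[|[|[|//]]]] ?];
  rewrite /act_word /pure_word /htuple /braid_conjugator /tconj /beta /=;
  congr (_, _, _, _); tu_eq.
Qed.

Variables (G : {group gT}) (tG : t \in G) (uG : u \in G).

Local Notation h i := (tcls G (htuple s1 s2 i)).

Local Ltac tu_in_G :=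
  repeat first [exact: tG | exact: uG | exact: group1 | apply: groupM | apply: groupX
               | rewrite groupV].

Lemma braid_conjugator_in j i : braid_conjugator j i \in G.
Proof. by case: j => [|[|[|[|[|j]]]]]; case: i => [|[|[|i]]]; tu_in_G. Qed.

Lemma act_pure_h j i : act_pure [:: (j, false)] (h i) = h (rho j i).
Proof.
by rewrite act_pure1 act_cls_tcls act_pure_word_htuple tcls_tconj ?braid_conjugator_in.
Qed.

Lemma act_pure_h_inv j i : act_pure [:: (j, true)] (h i) = h ((rho j)^-1 i).
Proof. by rewrite -{1}(permKV (rho j) i) -act_pure_h act_pureK. Qed.

Lemma act_pure_h_orbit w i : exists k, act_pure w (h i) = h k.
Proof.
elim: w i => [|[j []] w IH] i; first by exists i; rewrite act_pure_nil.
  by rewrite act_pure_cons act_pure_h_inv.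
by rewrite act_pure_cons act_pure_h.
Qed.

Lemma h_orbit X :
  (exists w, act_pure w (h (i4 0)) = X) <-> X \in [set h i | i : 'I_4].
Proof.
split=> [[w <-] | /imsetP[i _ ->]].
  by have [k ->] := act_pure_h_orbit w (i4 0); apply: imset_f.
have ordE k (lt_k : k < 4) : Ordinal lt_k = i4 k by apply: val_inj; rewrite /= inordK.
case: i => [[|[|[|[|//]]]] lt_i]; rewrite ordE.
- by exists [::]; rewrite act_pure_nil.
- by exists [:: (j6 0, false)]; rewrite act_pure_h rho_inord.
- by exists [:: (j6 0, false); (j6 0, false)]; rewrite act_pure_cons !act_pure_h !rho_inord.
- by exists [:: (j6 2, false)]; rewrite act_pure_h rho_inord.
Qed.

Local Ltac in_class g :=
  apply/imsetP; exists g; [tu_in_G | tu_eq].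

Lemma h_inSigma (defG : G :=: <<[set s1; s2]>>) i :
  inSigma G (s1 ^: G) (s1 ^: G) (s1 ^: G) ((s1 * s2 * s1) ^: G) (h i).
Proof.
case: i => [[|[|[|[|//]]]] ?]; do 4 eexists; (split; [ reflexivity | |
  apply: (gen_set4 defG); rewrite ?subUset ?sub1set ?inE ?eqxx ?orbT //;
    repeat (apply/andP; split); tu_in_G
  | tu_eq ]).
- by split; [in_class (1 : gT) | in_class t | in_class (1 : gT) | in_class (1 : gT)].
- by split; [in_class (u * t) | in_class t | in_class (1 : gT) | in_class (u * u * t)].
- by split; [in_class t | in_class (1 : gT) | in_class (1 : gT) | in_class (u * u * t)].
- by split; [in_class t | in_class t | in_class (1 : gT) | in_class (u * t)].
Qed.

End PureBraidOrbit.

Theorem theorem6 (gT : finGroupType) (G : {group gT}) (s1 s2 : gT) :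
  G :!=: 1 -> 'Z(G) = 1 ->
  s1 \in G -> s2 \in G -> G :=: <<[set s1; s2]>> ->
  s1 * s2 * s1 = s2 * s1 * s2 -> #[s1 * s2 * s1] = 2%N ->
  let C := s1 ^: G in
  let D := (s1 * s2 * s1) ^: G in
  let h := fun i : 'I_4 => tcls G (htuple s1 s2 i) in
  let Z := [set h i | i : 'I_4] in
  (* Z is contained in Sigma^i(C,C,C,D) *)
  (forall i, inSigma G C C C D (h i)) /\
  (* Z = {h_1}^{B_4} *)
  (forall X, (exists w : seq ('I_6 * bool), act_pure w (h (i4 0)) = X) <-> X \in Z) /\
  (* orbit length 4 *)
  #|Z| = 4%N /\
  exists rho : 'I_6 -> {perm 'I_4},
    (forall (j : 'I_6) (i : 'I_4), act_pure [:: (j, false)] (h i) = h (rho j i)) /\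
    (* rho_4(beta12) = (1,2,3)(4) *)
    [/\ rho (j6 0) (i4 0) = i4 1, rho (j6 0) (i4 1) = i4 2,
        rho (j6 0) (i4 2) = i4 0 & rho (j6 0) (i4 3) = i4 3] /\
    (* rho_4(beta13) = (1,3,4)(2) *)
    [/\ rho (j6 1) (i4 0) = i4 2, rho (j6 1) (i4 2) = i4 3,
        rho (j6 1) (i4 3) = i4 0 & rho (j6 1) (i4 1) = i4 1] /\
    (* rho_4(beta14) = (1,4,2)(3) *)
    [/\ rho (j6 2) (i4 0) = i4 3, rho (j6 2) (i4 3) = i4 1,
        rho (j6 2) (i4 1) = i4 0 & rho (j6 2) (i4 2) = i4 2] /\
    (* rho_4(B_4) is isomorphic to A_4 *)
    (<<[set rho j | j : 'I_6]>> \isog ('Alt_('I_4))%G) /\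
    (* genus 0 *)
    genusZ #|Z| #|porbits (rho (j6 0))| #|porbits (rho (j6 1))| #|porbits (rho (j6 2))| = 0%R.
Proof.
move=> ntG ZG1 s1G s2G defG braid ord2.
have ns12 := gen2_centerless_not_commute ntG ZG1 defG.
have [t [u [t2 u3 tG uG [def_s1 def_s2]]]] := braid_involution_param s1G s2G braid ord2.
subst s1 s2 => C D h Z.
have cardZ : #|Z| = 4 by rewrite card_imset ?card_ord //; apply: htuple_tcls_inj.
split; first exact: h_inSigma.
split; first exact: h_orbit.
split; first exact: cardZ.
exists rho; split; first exact: act_pure_h.
do 3 (split; first by split; rewrite rho_inord).
split; first by rewrite gen_rho_Alt isog_refl.
by rewrite cardZ !card_porbits_rho; apply/eqP; vm_compute.
Qed.
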